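(* Let $\mathbf u$ be an aperiodic infinite word over a finite alphabet whose language is closed under reversal, and let $N$ be an integer such that $T_{\mathbf u}(n)=0$ for all $n\ge N$. Then for every factor $w$ of $\mathbf u$ with $|w|\ge N$, the occurrences of $w$ and of $\overline w$ in $\mathbf u$ alternate: if $w\neq\overline w$, then between any two occurrences of $w$ in $\mathbf u$ there is an occurrence of $\overline w$, and between any two occurrences of $\overline w$ there is an occurrence of $w$.
   Context: An infinite word is aperiodic if it is not eventually periodic. For a finite word $w=w_0\cdots w_{n-1}$ its reversal is $\overline{w}=w_{n-1}\cdots w_0$; $w$ is a palindrome if $w=\overline{w}$. An occurrence of $w$ in $\mathbf u=u_0u_1\cdots$ is an index $i$ with $u_i\cdots u_{i+|w|-1}=w$. $\mathcal L_n(\mathbf u)$ is the set of factors of $\mathbf u$ of length $n$; the language is closed under reversal if every factor's reversal is a factor. $\mathcal C_{\mathbf u}(n)=\#\mathcal L_n(\mathbf u)$, $\mathcal P_{\mathbf u}(n)$ is the number of palindromes in $\mathcal L_n(\mathbf u)$, and $T_{\mathbf u}(n)=\mathcal C_{\mathbf u}(n+1)-\mathcal C_{\mathbf u}(n)+2-\mathcal P_{\mathbf u}(n+1)-\mathcal P_{\mathbf u}(n)$. *)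

From mathcomp Require Import all_boot all_order all_algebra.
From Stdlib Require Import ClassicalEpsilon.
Set Implicit Arguments. Unset Strict Implicit. Unset Printing Implicit Defensive.

Definition factor_at (A : Type) (u : nat -> A) (i n : nat) : seq A :=
  mkseq (fun k => u (i + k)) n.

Definition occurrence (A : eqType) (u : nat -> A) (w : seq A) (i : nat) : Prop :=
  factor_at u i (size w) = w.

Definition is_factor (A : eqType) (u : nat -> A) (w : seq A) : Prop :=
  exists i, occurrence u w i.

Definition is_factorb (A : eqType) (u : nat -> A) (w : seq A) : bool :=
  if excluded_middle_informative (is_factor u w) then true else false.

Definition palindrome (A : eqType) (w : seq A) : bool := rev w == w.

Definition eventually_periodic (A : Type) (u : nat -> A) : Prop :=
  exists p N, 0 < p /\ forall n, N <= n -> u (n + p) = u n.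

Definition aperiodic (A : Type) (u : nat -> A) : Prop := ~ eventually_periodic u.

Definition closed_under_reversal (A : eqType) (u : nat -> A) : Prop :=
  forall w, is_factor u w -> is_factor u (rev w).

Definition complexity (A : finType) (u : nat -> A) (n : nat) : nat :=
  #|[set t : n.-tuple A | is_factorb u t]|.

Definition pal_complexity (A : finType) (u : nat -> A) (n : nat) : nat :=
  #|[set t : n.-tuple A | is_factorb u t && palindrome t]|.

Definition T_u (A : finType) (u : nat -> A) (n : nat) : int :=
  ((complexity u n.+1)%:Z - (complexity u n)%:Z + 2
   - (pal_complexity u n.+1)%:Z - (pal_complexity u n)%:Z)%R.

From mathcomp Require Import all_boot all_order all_algebra.
From mathcomp Require Import zify.
From Stdlib Require Import Classical ClassicalEpsilon.
Set Implicit Arguments. Unset Strict Implicit. Unset Printing Implicit Defensive.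

(* Fix n = |w| >= N. In the reduced Rauzy graph of order n the vertices are the factors of
   length n up to reversal, and a factor of length n+1, up to reversal, joins the classes of its
   prefix and suffix. Closure under reversal makes u recurrent, so the graph is connected and has
   at least #vertices - 1 edges; counting factors and palindromes then shows that T_u(n) = 0
   forces it to be a tree and every factor of length n+1 whose prefix and suffix lie in one class
   to be a palindrome. Reading u from an occurrence of w to the next one traces a closed walk in
   the tree at the class of w. If rev w does not occur in between, the walk leaves that class
   along an edge it never uses again, which a tree does not allow, unless the two occurrences are
   adjacent, where the palindrome of length n+1 spanning them forces w = rev w. *)

Lemma sign_change (P : nat -> bool) a b :
  a <= b -> P a != P b -> exists2 k, a <= k < b & P k != P k.+1.
Proof.
elim: b => [|b IH] le_ab neq_ab.
  by move: le_ab neq_ab; rewrite leqn0 => /eqP->; rewrite eqxx.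
case: (ltngtP a b.+1) le_ab => // [lt_ab _ | eq_ab _]; last by rewrite eq_ab eqxx in neq_ab.
have [eq_b|neq_b] := eqVneq (P b) (P b.+1); last by exists b; rewrite // ltnSn andbT -ltnS.
rewrite -eq_b in neq_ab; have [k le_k neq_k] := IH lt_ab neq_ab.
by exists k => //; case/andP: le_k => -> /ltnW.
Qed.

Section Graph.
Variables (T E : finType) (ends : E -> T * T).
Implicit Types (F : {set E}) (X Y : {set T}) (v : nat -> T) (e : nat -> E) (f : E) (x y : T).

Definition inner (F : {set E}) (X : {set T}) : {set E} :=
  [set f in F | ((ends f).1 \in X) && ((ends f).2 \in X)].

Definition crosses (Y : {set T}) (f : E) : bool :=
  ((ends f).1 \in Y) != ((ends f).2 \in Y).

Definition joins (f : E) (x y : T) : bool :=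
  (ends f == (x, y)) || (ends f == (y, x)).

Definition connected_on (S : {set T}) (F : {set E}) : Prop :=
  forall Y : {set T}, Y \subset S -> (exists a, a \in Y) ->
    (exists b, b \in S :\: Y) -> exists2 f, f \in F & crosses Y f.

(* Stalls [v k = v k.+1] are allowed: consecutive factors of a word may lie in one class. *)
Definition walk (F : {set E}) (v : nat -> T) (e : nat -> E) (a b : nat) : Prop :=
  forall k, a <= k < b -> v k != v k.+1 -> (e k \in F) && joins (e k) (v k) (v k.+1).

Definition walk_vertices (v : nat -> T) (a b : nat) : {set T} :=
  [set v k | k : 'I_b.+1 & a <= k].

Lemma walk_verticesP v a b x :
  reflect (exists2 k, a <= k <= b & x = v k) (x \in walk_vertices v a b).
Proof.
apply: (iffP imsetP) => [[k] | [k /andP [le_ak le_kb] ->]].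
  by rewrite inE => le_ak ->; exists (val k); rewrite // le_ak -ltnS ltn_ord.
have lt_kb : k < b.+1 by rewrite ltnS.
by exists (Ordinal lt_kb); rewrite ?inE.
Qed.

Lemma joins_crosses f x y (Y : {set T}) : joins f x y -> (x \in Y) != (y \in Y) -> crosses Y f.
Proof. by rewrite /crosses => /orP [] /eqP-> //=; rewrite eq_sym. Qed.

Lemma joins_inner F X f x y :
  joins f x y -> f \in F -> x \in X -> y \in X -> f \in inner F X.
Proof. by move=> /orP [] /eqP ends_f Ff xX yX; rewrite inE Ff ends_f /= xX yX. Qed.

Lemma walk_crosses F v e a b (Y : {set T}) : a <= b -> walk F v e a b ->
  (v a \in Y) != (v b \in Y) -> exists2 k, a <= k < b & (e k \in F) && crosses Y (e k).
Proof.
move=> le_ab walk_ve neq_ab.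
have [k le_k neq_k] := @sign_change (fun k => v k \in Y) a b le_ab neq_ab.
have neq_v : v k != v k.+1 by apply: contraNneq neq_k => ->.
have /andP [Fe join_e] := walk_ve k le_k neq_v.
by exists k; rewrite // Fe (joins_crosses join_e).
Qed.

Lemma walk_sub F v e a b c d : walk F v e a b -> a <= c -> d <= b -> walk F v e c d.
Proof. by move=> walk_ve le_ac le_db k /andP [le_ck lt_kd]; apply: walk_ve; lia. Qed.

Lemma walk_connected F v e a b : walk F v e a b -> connected_on (walk_vertices v a b) F.
Proof.
move=> walk_ve Y sub_Y [x xY] [y]; rewrite inE => /andP [yNY /walk_verticesP [k2 k2_ab eq_y]].
have /walk_verticesP [k1 k1_ab eq_x] := subsetP sub_Y x xY.
have cross c d : a <= c -> d <= b -> c <= d -> (v c \in Y) != (v d \in Y) ->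
    exists2 f, f \in F & crosses Y f.
  move=> le_ac le_db le_cd neq_cd.
  have [k _ /andP [Fe cross_e]] := walk_crosses le_cd (walk_sub walk_ve le_ac le_db) neq_cd.
  by exists (e k).
have neq_12 : (v k1 \in Y) != (v k2 \in Y) by rewrite -eq_x -eq_y xY (negbTE yNY).
case/andP: k1_ab => [a_k1 k1_b]; case/andP: k2_ab => [a_k2 k2_b].
have [le_12|lt_21] := leqP k1 k2; first exact: (cross k1 k2).
by apply: (cross k2 k1) => //; [apply: ltnW | rewrite eq_sym].
Qed.

Section Tree.
Variables (S : {set T}) (F : {set E}).
Hypothesis ends_in : forall f, f \in F -> ((ends f).1 \in S) && ((ends f).2 \in S).
Hypothesis S_connected : connected_on S F.

Lemma inner_full : inner F S = F.
Proof. by apply/setP => f; rewrite inE; case: (boolP (f \in F)) => // /ends_in. Qed.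

Lemma connected_card_inner X : X \subset S -> (exists a, a \in X) ->
  #|inner F X| + #|S| <= #|F| + #|X|.
Proof.
move=> + [a aX]; have [m] := ubnP #|S :\: X|.
elim: m X aX => // m IH X aX lt_m sub_XS.
have [sub_SX|/subsetPn [b bS bNX]] := boolP (S \subset X).
  have -> : X = S by apply/eqP; rewrite eqEsubset sub_XS.
  by rewrite inner_full.
have [||f Ff cross_f] := S_connected sub_XS; [by exists a | by exists b; rewrite inE bNX|].
have [c [cS cNX f_in]] : exists c, [/\ c \in S, c \notin X & f \in inner F (c |: X)].
  have /andP [f1S f2S] := ends_in Ff; move: cross_f; rewrite /crosses.
  case f1X: ((ends f).1 \in X); case f2X: ((ends f).2 \in X) => // _.
    by exists (ends f).2; rewrite f2X inE Ff !in_setU1 eqxx f1X orbT.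
  by exists (ends f).1; rewrite f1X inE Ff !in_setU1 eqxx f2X orbT.
have sub_inner : inner F X \proper inner F (c |: X).
  apply/properP; split.
    by apply/subsetP => g; rewrite !inE => /andP [-> /andP [-> ->]]; rewrite !orbT.
  exists f => //; rewrite inE Ff /=; move: cross_f; rewrite /crosses.
  by case: ((ends f).1 \in X); case: ((ends f).2 \in X).
have card_cX : #|c |: X| = #|X|.+1 by rewrite cardsU1 cNX.
have lt_m' : #|S :\: (c |: X)| < m.
  rewrite -ltnS (leq_trans _ lt_m) // ltnS; apply: proper_card; apply/properP; split.
    by apply/subsetP => y; rewrite !inE negb_or => /andP [/andP [_ ->] ->].
  by exists c; rewrite !inE ?eqxx // cNX cS.
have := IH (c |: X) (setU1r c aX) lt_m'; rewrite subUset sub1set cS sub_XS => /(_ isT).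
rewrite card_cX addnS => le_IH.
by rewrite -ltnS (leq_trans _ le_IH) // ltn_add2r proper_card.
Qed.

Lemma connected_card_le x : x \in S -> #|S| <= #|F|.+1.
Proof.
move=> xS; have := @connected_card_inner [set x]; rewrite sub1set xS cards1 addn1.
by move=> /(_ isT (ex_intro _ x (set11 x))); apply: leq_trans; rewrite leq_addl.
Qed.

Lemma tree_card_inner_lt X : #|F|.+1 = #|S| -> X \subset S -> (exists a, a \in X) ->
  #|inner F X| < #|X|.
Proof.
move=> card_tree sub_XS neX; have := connected_card_inner sub_XS neX.
by rewrite -card_tree addnS -addSn addnC leq_add2l.
Qed.

End Tree.

Lemma tree_closed_walk_reuses_first_edge (S : {set T}) F v e a b :
    (forall f, f \in F -> ((ends f).1 \in S) && ((ends f).2 \in S)) ->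
    connected_on S F -> #|F|.+1 = #|S| ->
    walk F v e a b -> (forall k, a <= k <= b -> v k \in S) ->
    a < b -> v a = v b -> v a != v a.+1 ->
  exists2 k, a < k < b & (v k != v k.+1) && (e k == e a).
Proof.
move=> ends_in S_connected card_tree walk_ve vS lt_ab eq_ab neq_a.
apply: NNPP => no_reuse.
pose X := walk_vertices v a.+1 b; pose F' := inner F X :\ e a.
have vX k : a <= k <= b -> v k \in X.
  case/andP=> le_ak le_kb; apply/walk_verticesP.
  case: (ltngtP a k) le_ak => // [lt_ak _ | <- _]; first by exists k; rewrite ?lt_ak.
  by exists b; rewrite ?lt_ab ?leqnn.
have walk_F' : walk F' v e a.+1 b.
  move=> k /andP [lt_ak lt_kb] neq_k.
  have := walk_ve k; rewrite (ltnW lt_ak) lt_kb => /(_ isT neq_k) /andP [Fe join_e].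
  have kX : v k \in X by apply: vX; rewrite (ltnW lt_ak) ltnW.
  have k1X : v k.+1 \in X by apply: vX; rewrite lt_kb leqW // ltnW.
  rewrite join_e in_setD1 (joins_inner join_e Fe kX k1X) !andbT.
  apply/eqP => eq_e; apply: no_reuse; exists k; first by rewrite lt_ak.
  by rewrite neq_k eq_e eqxx.
have ea_inner : e a \in inner F X.
  have := walk_ve a; rewrite leqnn lt_ab => /(_ isT neq_a) /andP [Fe join_e].
  by rewrite (joins_inner join_e Fe) ?vX //; lia.
have ends_F' f : f \in F' -> ((ends f).1 \in X) && ((ends f).2 \in X).
  by rewrite !inE => /andP [_ /andP [_ ->]].
have bX : v b \in X by apply: vX; rewrite leqnn ltnW.
have sub_XS : X \subset S.
  by apply/subsetP => x /walk_verticesP [k /andP [lt_ak le_kb] ->]; rewrite vS // ltnW.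
have le_X := connected_card_le ends_F' (walk_connected walk_F') bX.
have := tree_card_inner_lt ends_in S_connected card_tree sub_XS (ex_intro _ (v b) bX).
by rewrite (cardsD1 (e a)) ea_inner => /leq_trans /(_ le_X); rewrite ltnn.
Qed.

End Graph.

Section Involution.
Variables (T : finType) (r : T -> T).
Hypothesis rK : involutive r.

(* An orbit [{x, r x}] is represented by its element of smaller [enum_rank]. *)
Definition canon (x : T) : bool := enum_rank x <= enum_rank (r x).
Definition rep (x : T) : T := if canon x then x else r x.

Lemma canonN x : ~~ canon x = canon (r x) && (r x != x).
Proof.
rewrite /canon rK; have [->|neq_x] := eqVneq (r x) x; first by rewrite leqnn.
by rewrite andbT -ltnNge ltn_neqAle val_eqE (inj_eq enum_rank_inj) neq_x.
Qed.

Lemma rep_cases x : rep x = x \/ rep x = r x.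
Proof. by rewrite /rep; case: ifP; [left | right]. Qed.

Lemma rep_canon x : canon x -> rep x = x.
Proof. by rewrite /rep => ->. Qed.

Lemma canon_rep x : canon (rep x).
Proof. by rewrite /rep; case: ifP => // /negbT; rewrite canonN => /andP []. Qed.

Lemma rep_inv x : rep (r x) = rep x.
Proof.
rewrite /rep rK; have := canonN x.
by case: (canon x); case: (canon (r x)) => //= /esym /negbFE /eqP.
Qed.

Lemma eq_rep x y : rep x = rep y -> x = y \/ x = r y.
Proof.
case: (rep_cases x) => ->; case: (rep_cases y) => -> eq_xy; [left | right | right | left] => //.
  by rewrite -eq_xy rK.
exact: (can_inj rK).
Qed.

Lemma rep_in (X : {set T}) x : (forall y, (r y \in X) = (y \in X)) -> x \in X -> rep x \in X.
Proof. by move=> X_inv xX; case: (rep_cases x) => ->; rewrite ?X_inv. Qed.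

Lemma card_involution (X : {set T}) : (forall x, (r x \in X) = (x \in X)) ->
  #|X| + #|[set x in X | r x == x]| = 2 * #|[set x in X | canon x]|.
Proof.
move=> X_inv; set C := [set x in X | canon x]; set Fix := [set x | r x == x].
have := cardsID [set x | canon x] X; have := cardsID Fix C.
have -> : X :&: [set x | canon x] = C by apply/setP => x; rewrite !inE.
have -> : C :&: Fix = [set x in X | r x == x].
  apply/setP => x; rewrite /C /Fix !inE; case: eqP => [fix_x|_]; last by rewrite !andbF.
  by rewrite /canon fix_x leqnn !andbT.
have -> : X :\: [set x | canon x] = r @^-1: (C :\: Fix).
  apply/setP => x; rewrite /C /Fix !inE canonN rK X_inv (eq_sym x).
  by case: (canon _); case: (x \in X); rewrite ?andbF.
rewrite card_preimset; last exact: can_inj rK.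
lia.
Qed.

End Involution.

Section Tuples.
Variable A : Type.

Lemma rev_tupleK m : involutive (@rev_tuple m A).
Proof. by move=> t; apply: val_inj; rewrite /= revK. Qed.

Lemma tnth_rev m (t : m.-tuple A) i : tnth (rev_tuple t) i = tnth t (rev_ord i).
Proof. by rewrite (tnth_nth (tnth t i)) [RHS](tnth_nth (tnth t i)) /= nth_rev size_tuple. Qed.

Variable n : nat.

Definition tprefix (e : n.+1.-tuple A) : n.-tuple A :=
  [tuple tnth e (widen_ord (leqnSn n) i) | i < n].
Definition tsuffix (e : n.+1.-tuple A) : n.-tuple A := [tuple tnth e (lift ord0 i) | i < n].

Lemma tsuffix_rev e : tsuffix (rev_tuple e) = rev_tuple (tprefix e).
Proof.
apply: eq_from_tnth => i; rewrite tnth_mktuple !tnth_rev tnth_mktuple.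
by congr tnth; apply: val_inj; rewrite /= /bump leq0n add1n subSS.
Qed.

Lemma tprefix_rev e : tprefix (rev_tuple e) = rev_tuple (tsuffix e).
Proof.
apply: eq_from_tnth => i; rewrite tnth_mktuple !tnth_rev tnth_mktuple.
by congr tnth; apply: val_inj; rewrite /= /bump leq0n add1n subSn.
Qed.

End Tuples.

Section Word.
Variables (A : finType) (u : nat -> A).

Lemma is_factorbP w : reflect (is_factor u w) (is_factorb u w).
Proof. by rewrite /is_factorb; case: excluded_middle_informative => h; constructor. Qed.

Lemma occurrenceP w k :
  occurrence u w k <-> forall j, j < size w -> u (k + j) = nth (u 0) w j.
Proof.
split=> [occ_w j lt_j | eq_w]; first by rewrite -[in RHS]occ_w nth_mkseq.
apply: (@eq_from_nth _ (u 0)) => [|j]; rewrite size_mkseq // => lt_j.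
by rewrite nth_mkseq ?eq_w.
Qed.

Lemma occurs_after w : closed_under_reversal u -> is_factor u w ->
  forall i, exists2 j, i < j & occurrence u w j.
Proof.
move=> closed /closed [p /occurrenceP]; rewrite size_rev => occ_p i.
have /closed [q /occurrenceP] : is_factor u (factor_at u 0 (i + p + size w + 1)).
  by exists 0; rewrite /occurrence size_mkseq.
rewrite size_rev size_mkseq => occ_q.
(* [rev w] sits at [p] in this prefix, so [w] sits at [q + i + 1] in its mirror image. *)
exists (q + i + 1); first lia.
apply/occurrenceP => k lt_k.
have -> : q + i + 1 + k = q + (i + 1 + k) by lia.
rewrite occ_q ?nth_rev ?size_mkseq ?nth_mkseq; try lia.
have -> : 0 + (i + p + size w + 1 - (i + 1 + k).+1) = p + (size w - k.+1) by lia.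
rewrite occ_p ?nth_rev; try by rewrite ltn_subrL (leq_ltn_trans (leq0n k) lt_k).
by congr nth; rewrite -subSn // subKn // ltnW.
Qed.

Definition factor_tuple m k : m.-tuple A :=
  @Tuple m A (factor_at u k m) (introT eqP (size_mkseq _ _)).

Lemma tnth_factor_tuple m k i : tnth (factor_tuple m k) i = u (k + i).
Proof. by rewrite (tnth_nth (u 0)) /= nth_mkseq. Qed.

Lemma tprefix_factor m k : tprefix (factor_tuple m.+1 k) = factor_tuple m k.
Proof. by apply: eq_from_tnth => i; rewrite tnth_mktuple !tnth_factor_tuple. Qed.

Lemma tsuffix_factor m k : tsuffix (factor_tuple m.+1 k) = factor_tuple m k.+1.
Proof. by apply: eq_from_tnth => i; rewrite tnth_mktuple !tnth_factor_tuple lift0 addnS. Qed.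

Lemma occurrence_tuple m (t : m.-tuple A) k : occurrence u t k <-> factor_tuple m k = t.
Proof. by rewrite /occurrence size_tuple; split => [eq_t|<-]; first apply: val_inj. Qed.

Definition factors m : {set m.-tuple A} := [set t : m.-tuple A | is_factorb u t].
Definition pal_factors m : {set m.-tuple A} :=
  [set t : m.-tuple A | is_factorb u t && palindrome t].

Lemma factor_tuple_in m k : factor_tuple m k \in factors m.
Proof. by rewrite inE; apply/is_factorbP; exists k; apply/occurrence_tuple. Qed.

Lemma factorsP m (t : m.-tuple A) : t \in factors m -> exists k, factor_tuple m k = t.
Proof. by rewrite inE => /is_factorbP [k /occurrence_tuple]; exists k. Qed.

End Word.

Section Rauzy.
Variables (A : finType) (u : nat -> A).
Hypothesis closed : closed_under_reversal u.
Variable n : nat.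

Local Notation vrep := (rep (@rev_tuple n A)).
Local Notation erep := (rep (@rev_tuple n.+1 A)).
Local Notation vertex k := (vrep (factor_tuple u n k)).
Local Notation edge k := (erep (factor_tuple u n.+1 k)).

Lemma factors_rev m (t : m.-tuple A) : (rev_tuple t \in factors u m) = (t \in factors u m).
Proof.
have fac_rev (s : m.-tuple A) : s \in factors u m -> rev_tuple s \in factors u m.
  by rewrite !inE => /is_factorbP /closed /is_factorbP.
by apply/idP/idP => /fac_rev //; rewrite rev_tupleK.
Qed.

(* The reduced Rauzy graph of order [n]: vertices are the factors of length [n] and edges the
   factors of length [n+1], both up to reversal; an edge joins the classes of its prefix and
   suffix, and edges that would be loops are discarded. *)
Definition rauzy_ends (e : n.+1.-tuple A) : n.-tuple A * n.-tuple A :=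
  (vrep (tprefix e), vrep (tsuffix e)).

Definition loops : {set n.+1.-tuple A} :=
  [set e in factors u n.+1 | (rauzy_ends e).1 == (rauzy_ends e).2].

Definition vertices : {set n.-tuple A} := [set x in factors u n | canon (@rev_tuple n A) x].

Definition edges : {set n.+1.-tuple A} :=
  [set e in factors u n.+1 :\: loops | canon (@rev_tuple n.+1 A) e].

Lemma rauzy_ends_rev e : rauzy_ends (rev_tuple e) = ((rauzy_ends e).2, (rauzy_ends e).1).
Proof. by rewrite /rauzy_ends tprefix_rev tsuffix_rev !(rep_inv (@rev_tupleK _ _)). Qed.

Lemma rauzy_ends_factor k : rauzy_ends (factor_tuple u n.+1 k) = (vertex k, vertex k.+1).
Proof. by rewrite /rauzy_ends tprefix_factor tsuffix_factor. Qed.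

Lemma joins_rep e : joins rauzy_ends (erep e) (rauzy_ends e).1 (rauzy_ends e).2.
Proof.
by case: (rep_cases (@rev_tuple n.+1 A) e) => ->; rewrite /joins ?rauzy_ends_rev eqxx ?orbT.
Qed.

Lemma pal_loop e : rev_tuple e = e -> (rauzy_ends e).1 = (rauzy_ends e).2.
Proof. by move=> pal_e; have := rauzy_ends_rev e; rewrite pal_e => -[]. Qed.

Lemma nonloops_rev e :
  (rev_tuple e \in factors u n.+1 :\: loops) = (e \in factors u n.+1 :\: loops).
Proof.
rewrite !in_setD factors_rev [rev_tuple e \in loops]inE [e \in loops]inE.
by rewrite factors_rev rauzy_ends_rev eq_sym.
Qed.

Lemma vertex_in k : vertex k \in vertices.
Proof.
rewrite inE (canon_rep (@rev_tupleK _ _)) andbT.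
by rewrite rep_in ?factor_tuple_in // => x; apply: factors_rev.
Qed.

Lemma edges_ends f :
  f \in edges -> ((rauzy_ends f).1 \in vertices) && ((rauzy_ends f).2 \in vertices).
Proof.
rewrite inE in_setD => /andP [/andP [_ /factorsP [k <-]] _].
by rewrite rauzy_ends_factor !vertex_in.
Qed.

Lemma rauzy_walk a b : walk rauzy_ends edges (fun k => vertex k) (fun k => edge k) a b.
Proof.
move=> k _ neq_k; have := joins_rep (factor_tuple u n.+1 k).
rewrite rauzy_ends_factor => ->; rewrite andbT inE (canon_rep (@rev_tupleK _ _)) andbT.
rewrite rep_in //; first exact: nonloops_rev.
by rewrite in_setD factor_tuple_in inE rauzy_ends_factor /= negb_and neq_k orbT.
Qed.

Lemma rauzy_connected : connected_on rauzy_ends vertices edges.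
Proof.
move=> Y sub_Y [x xY] [y]; rewrite in_setD => /andP [yNY].
move=> /setIdP [y_fac y_canon]; have /setIdP [x_fac x_canon] := subsetP sub_Y x xY.
have [p fac_p] := factorsP x_fac.
move: y_fac; rewrite inE => /is_factorbP /(occurs_after closed) /(_ p) [q lt_pq].
move=> /occurrence_tuple fac_q.
have neq_pq : (vertex p \in Y) != (vertex q \in Y).
  by rewrite fac_p fac_q (rep_canon x_canon) (rep_canon y_canon) xY (negbTE yNY).
have [k _ /andP [e_in cross_e]] := walk_crosses (ltnW lt_pq) (rauzy_walk (a:=p) (b:=q)) neq_pq.
by exists (edge k).
Qed.

Lemma card_vertices : #|factors u n| + #|pal_factors u n| = 2 * #|vertices|.
Proof.
have := card_involution (@rev_tupleK A n) (@factors_rev n).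
suff -> : [set x in factors u n | rev_tuple x == x] = pal_factors u n by [].
by apply/setP => x; rewrite !inE.
Qed.

Lemma card_edges : #|factors u n.+1| = #|loops| + 2 * #|edges|.
Proof.
have := card_involution (@rev_tupleK A n.+1) nonloops_rev.
have -> : [set e in factors u n.+1 :\: loops | rev_tuple e == e] = set0.
  apply/setP => e; rewrite inE in_set0.
  apply/andP => -[/setDP [e_fac e_loop] /eqP /pal_loop eq_ends].
  by move: e_loop; rewrite [e \in loops]inE e_fac eq_ends eqxx.
rewrite cards0 addn0 => <-.
have := cardsID loops (factors u n.+1); suff -> : factors u n.+1 :&: loops = loops by [].
by apply/setIidPr/subsetP => e /setIdP [].
Qed.

Lemma pal_factors_loops : pal_factors u n.+1 \subset loops.
Proof.
apply/subsetP => e /setIdP [e_fac /eqP pal_e].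
by rewrite !inE e_fac (@pal_loop e) ?eqxx //; apply: val_inj.
Qed.

Lemma rauzy_tree : T_u u n = 0%R -> loops = pal_factors u n.+1 /\ #|edges|.+1 = #|vertices|.
Proof.
move=> T0.
have T0' : (#|factors u n.+1|%:Z - #|factors u n|%:Z + 2
            - #|pal_factors u n.+1|%:Z - #|pal_factors u n|%:Z = 0)%R := T0.
have le_PL : #|pal_factors u n.+1| <= #|loops| := subset_leq_card pal_factors_loops.
have le_VE : #|vertices| <= #|edges|.+1 :=
  connected_card_le edges_ends rauzy_connected (vertex_in 0).
have card_E := card_edges; have card_V := card_vertices.
have card_L : #|loops| <= #|pal_factors u n.+1| by lia.
split; last by lia.
by apply/esym/eqP; rewrite eqEcard pal_factors_loops card_L.
Qed.

Lemma pal_of_adjacent_occurrences (x : n.-tuple A) i : T_u u n = 0%R ->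
  factor_tuple u n i = x -> factor_tuple u n i.+1 = x -> rev_tuple x = x.
Proof.
move=> T0 fac_i fac_i1; have [loops_pal _] := rauzy_tree T0.
have pal_e : rev_tuple (factor_tuple u n.+1 i) = factor_tuple u n.+1 i.
  have : factor_tuple u n.+1 i \in pal_factors u n.+1.
    by rewrite -loops_pal inE factor_tuple_in rauzy_ends_factor fac_i fac_i1 eqxx.
  by rewrite inE => /andP [_ /eqP pal_e]; apply: val_inj.
have := congr1 (@tprefix A n) pal_e.
by rewrite tprefix_rev tsuffix_factor tprefix_factor fac_i fac_i1.
Qed.

Lemma rev_factor_between (x : n.-tuple A) i j : T_u u n = 0%R -> rev_tuple x != x ->
  i < j -> factor_tuple u n i = x -> factor_tuple u n j = x ->
  exists2 k, i < k < j & factor_tuple u n k = rev_tuple x.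
Proof.
move=> T0 nonpal lt_ij fac_i fac_j; apply: NNPP => no_rev.
have {}no_rev k : i < k < j -> factor_tuple u n k != rev_tuple x.
  by move=> k_ij; apply/eqP => fac_k; apply: no_rev; exists k.
have ex_t : exists t, (i < t) && (factor_tuple u n t == x) by exists j; rewrite lt_ij fac_j eqxx.
case: (ex_minnP ex_t) => t /andP [lt_it /eqP fac_t] t_min.
have le_tj : t <= j by apply: t_min; rewrite lt_ij fac_j eqxx.
have vertex_t k : i < k < t -> vertex k != vrep x.
  move=> /andP [lt_ik lt_kt]; apply/eqP => /(eq_rep (@rev_tupleK _ _)) [fac_k | fac_k].
    by have := t_min k; rewrite lt_ik fac_k eqxx => /(_ isT); rewrite leqNgt lt_kt.
  by move/eqP: fac_k; apply/negP; rewrite no_rev // lt_ik (leq_trans lt_kt).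
case: (ltngtP t i.+1) lt_it => // [lt_t | eq_t] _; last first.
  by move: nonpal; rewrite (pal_of_adjacent_occurrences T0 fac_i) ?eqxx // -eq_t.
have [_ card_tree] := rauzy_tree T0.
have := tree_closed_walk_reuses_first_edge edges_ends rauzy_connected card_tree
  (rauzy_walk (a:=i) (b:=t)) (fun k _ => vertex_in k) (ltnW lt_t).
rewrite fac_i fac_t eq_sym vertex_t ?ltnSn ?lt_t // => /(_ erefl isT) [k /andP [lt_ik lt_kt]].
move=> /andP [neq_k /eqP /(eq_rep (@rev_tupleK _ _)) [] eq_e].
  have := congr1 (@tprefix A n) eq_e; rewrite !tprefix_factor fac_i => fac_k.
  by have := vertex_t k; rewrite lt_ik lt_kt fac_k eqxx => /(_ isT).
have := congr1 (@tsuffix A n) eq_e.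
rewrite tsuffix_rev !tsuffix_factor tprefix_factor fac_i => fac_k.
have [eq_kj | neq_kj] := eqVneq k.+1 j; first by move: nonpal; rewrite -fac_k eq_kj fac_j eqxx.
by move/eqP: fac_k; apply/negP; rewrite no_rev // ltnW //= ltn_neqAle neq_kj (leq_trans lt_kt).
Qed.

End Rauzy.

Lemma rev_occurs_between (A : finType) (u : nat -> A) (w : seq A) i j :
    closed_under_reversal u -> T_u u (size w) = 0%R -> rev w != w -> i < j ->
    occurrence u w i -> occurrence u w j ->
  exists k, i < k < j /\ occurrence u (rev w) k.
Proof.
move=> closed T0 nonpal lt_ij /(occurrence_tuple _ (in_tuple w)) fac_i.
move=> /(occurrence_tuple _ (in_tuple w)) fac_j.
have [k k_ij fac_k] :=
  @rev_factor_between A u closed (size w) (in_tuple w) i j T0 nonpal lt_ij fac_i fac_j.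
by exists k; split=> //; rewrite /occurrence size_rev; exact: (congr1 val fac_k).
Qed.

Theorem corollary13 (A : finType) (u : nat -> A) (N : nat) :
  aperiodic u ->
  closed_under_reversal u ->
  (forall n, N <= n -> T_u u n = 0%R) ->
  forall w : seq A, is_factor u w -> N <= size w -> rev w != w ->
    (forall i j, i < j -> occurrence u w i -> occurrence u w j ->
       exists k, i < k < j /\ occurrence u (rev w) k) /\
    (forall i j, i < j -> occurrence u (rev w) i -> occurrence u (rev w) j ->
       exists k, i < k < j /\ occurrence u w k).
Proof.
move=> _ closed T0 w _ le_Nw nonpal; split=> i j lt_ij.
  exact: rev_occurs_between closed (T0 _ le_Nw) nonpal lt_ij.
rewrite -{3}(revK w); apply: rev_occurs_between closed _ _ lt_ij.
  by rewrite size_rev T0.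
by rewrite revK eq_sym.
Qed.
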